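(* In $M_2(\mathbb{C})[z]$ define $$\alpha_1=\begin{pmatrix}1&0\\-1&0\end{pmatrix}+\begin{pmatrix}0&0\\1&0\end{pmatrix}z+\begin{pmatrix}1&1\\0&0\end{pmatrix}\frac{z^2}{2},\qquad \alpha_3=\begin{pmatrix}1&1\\-1&-1\end{pmatrix}z+\begin{pmatrix}-1&1\\0&0\end{pmatrix}\frac{z^2}{2},$$ $$\alpha_4=\begin{pmatrix}0&0\\1&0\end{pmatrix}\frac{z^2}{2},\qquad \alpha_5=\begin{pmatrix}0&0\\0&1\end{pmatrix}\frac{z^2}{2},$$ and set $\beta_1=\alpha_1+\alpha_3$, $\beta_3=\alpha_1-\alpha_3$, $\beta_4=2\alpha_4$, $\beta_5=2\alpha_5$. Then the set $$\{\beta_4\beta_1,\beta_3,\beta_1\}\cup\{\beta_5^n: n\ge0\}\cup\{\beta_5^n\beta_4: n\ge0\}\cup\{\beta_5^n\beta_1\beta_4: n\ge0\}\cup\{\beta_5^n\beta_1: n\ge1\}\cup\{\beta_3\beta_5^n: n\ge1\}$$ $$\cup\{\beta_1\beta_5^n: n\ge1\}\cup\{\beta_3\beta_5^n\beta_4: n\ge0\}\cup\{\beta_1\beta_5^n\beta_4: n\ge1\}$$ is linearly independent over $\mathbb{C}$. *)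

From HB Require Import structures.
From mathcomp Require Import all_boot all_order all_algebra.
From mathcomp Require Import reals complex.
Set Implicit Arguments. Unset Strict Implicit. Unset Printing Implicit Defensive.
Import Order.TTheory GRing.Theory Num.Theory.
Local Open Scope ring_scope.

Section Defs.
Variable C : fieldType.

Definition mx2 (a b c d : C) : 'M[C]_2 :=
  \matrix_(i < 2, j < 2)
    (if (i : nat) == 0%N then (if (j : nat) == 0%N then a else b)
     else (if (j : nat) == 0%N then c else d)).

Definition half : C := 2^-1.

Definition alpha1 : {poly 'M[C]_2} :=
  (mx2 1 0 (-1) 0)%:P + (mx2 0 0 1 0)%:P * 'X + (half *: mx2 1 1 0 0)%:P * 'X^2.
Definition alpha3 : {poly 'M[C]_2} :=
  (mx2 1 1 (-1) (-1))%:P * 'X + (half *: mx2 (-1) 1 0 0)%:P * 'X^2.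
Definition alpha4 : {poly 'M[C]_2} := (half *: mx2 0 0 1 0)%:P * 'X^2.
Definition alpha5 : {poly 'M[C]_2} := (half *: mx2 0 0 0 1)%:P * 'X^2.

Definition beta1 := alpha1 + alpha3.
Definition beta3 := alpha1 - alpha3.
Definition beta4 := alpha4 *+ 2.
Definition beta5 := alpha5 *+ 2.

Definition Bset (p : {poly 'M[C]_2}) : Prop :=
  p = beta4 * beta1 \/ p = beta3 \/ p = beta1 \/
  (exists n : nat, p = beta5 ^+ n) \/
  (exists n : nat, p = beta5 ^+ n * beta4) \/
  (exists n : nat, p = beta5 ^+ n * beta1 * beta4) \/
  (exists2 n : nat, (1 <= n)%N & p = beta5 ^+ n * beta1) \/
  (exists2 n : nat, (1 <= n)%N & p = beta3 * beta5 ^+ n) \/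
  (exists2 n : nat, (1 <= n)%N & p = beta1 * beta5 ^+ n) \/
  (exists n : nat, p = beta3 * beta5 ^+ n * beta4) \/
  (exists2 n : nat, (1 <= n)%N & p = beta1 * beta5 ^+ n * beta4).

Definition cscale (c : C) (p : {poly 'M[C]_2}) : {poly 'M[C]_2} :=
  (c%:M)%:P * p.

Definition lin_indep (S : {poly 'M[C]_2} -> Prop) : Prop :=
  forall (s : seq {poly 'M[C]_2}) (c : {poly 'M[C]_2} -> C),
    uniq s -> (forall p, p \in s -> S p) ->
    \sum_(p <- s) cscale (c p) p = 0 ->
    forall p, p \in s -> c p = 0.
End Defs.

From Pilot Require Import Defs.
From HB Require Import structures.
From mathcomp Require Import all_boot all_order all_algebra zify ring.
From mathcomp Require Import reals complex.
Set Implicit Arguments. Unset Strict Implicit. Unset Printing Implicit Defensive.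
Import Order.TTheory GRing.Theory Num.Theory.
Local Open Scope ring_scope.

(* Every element of the set is a matrix polynomial with few nonzero coefficient
   entries; we compute them as sparse sums of weighted matrix units E_ij z^k,
   multiplying the sparse forms of the betas.  For each element w we then give a
   linear functional, an integer combination of coefficient entries, which is
   nonzero on w and vanishes on every other element of the set.  Such a
   biorthogonal system forces linear independence. *)

Record term := Term { tdeg : nat; trow : bool; tcol : bool; tcoef : int }.

Definition weight (s : seq term) (k : nat) (i j : bool) : int :=
  \sum_(t <- s | [&& tdeg t == k, trow t == i & tcol t == j]) tcoef t.

Definition pairing (f s : seq term) : int :=
  \sum_(t <- f) tcoef t * weight s (tdeg t) (trow t) (tcol t).

Definition term_mul (a b : term) : term :=
  Term (tdeg a + tdeg b) (trow a) (tcol b) (tcoef a * tcoef b).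

Definition terms_mul (s1 s2 : seq term) : seq term :=
  flatten [seq [seq term_mul a b | b <- s2 & tcol a == trow b] | a <- s1].

Section SparsePolynomials.
Variable K : comNzRingType.

Definition ord_of_bool (b : bool) : 'I_2 := if b then ord_max else ord0.

Definition munit (i j : bool) : 'M[K]_2 := delta_mx (ord_of_bool i) (ord_of_bool j).

Definition term_poly (t : term) : {poly 'M[K]_2} :=
  ((tcoef t)%:~R *: munit (trow t) (tcol t))%:P * 'X^(tdeg t).

Definition poly_of (s : seq term) : {poly 'M[K]_2} := \sum_(t <- s) term_poly t.

Definition coef_entry (k : nat) (i j : bool) (p : {poly 'M[K]_2}) : K :=
  p`_k (ord_of_bool i) (ord_of_bool j).

Lemma coef_entry_term_poly k i j t :
  coef_entry k i j (term_poly t) =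
  if [&& tdeg t == k, trow t == i & tcol t == j] then (tcoef t)%:~R else 0.
Proof.
rewrite /coef_entry coefCM coefXn eq_sym.
case: eqP => _ /=; last by rewrite mulr0 mxE.
rewrite mulr1 !mxE.
by case: t => d [] [] w; case: i; case: j; rewrite /= ?mulr1 ?mulr0.
Qed.

Lemma coef_entry_poly_of k i j s : coef_entry k i j (poly_of s) = (weight s k i j)%:~R.
Proof.
rewrite /coef_entry /poly_of /weight coef_sum summxE rmorph_sum [RHS]big_mkcond /=.
by apply: eq_bigr => t _; exact: coef_entry_term_poly.
Qed.

Lemma poly_entryP (p q : {poly 'M[K]_2}) :
  (forall k i j, coef_entry k i j p = coef_entry k i j q) -> p = q.
Proof.
move=> Epq; apply/polyP => k; apply/matrixP => i j.
have ord_of_boolP (a : 'I_2) : a = ord_of_bool (a != ord0).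
  by apply/val_inj; case: a => [[|[|]]].
by rewrite (ord_of_boolP i) (ord_of_boolP j); apply: Epq.
Qed.

Lemma poly_of_weight s s' :
  (forall k i j, weight s k i j = weight s' k i j) -> poly_of s = poly_of s'.
Proof. by move=> Ess'; apply: poly_entryP => k i j; rewrite !coef_entry_poly_of Ess'. Qed.

Lemma term_poly_mul a b :
  term_poly a * term_poly b = if tcol a == trow b then term_poly (term_mul a b) else 0.
Proof.
rewrite /term_poly mulrA -(mulrA _ 'X^_) -commr_polyXn mulrA -polyCM -mulrA -exprD.
rewrite -scalerAl -scalerAr scalerA -intrM /munit -mulmxE mul_delta_mx_cond.
by case: (trow b) (tcol a) => -[]; rewrite /= ?mulr1n ?mulr0n ?scaler0 ?mul0r.
Qed.

Lemma poly_of_mul s1 s2 : poly_of s1 * poly_of s2 = poly_of (terms_mul s1 s2).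
Proof.
rewrite /poly_of /terms_mul big_flatten big_map mulr_suml; apply: eq_bigr => a _.
rewrite big_map big_filter mulr_sumr [RHS]big_mkcond; apply: eq_bigr => b _.
by rewrite term_poly_mul.
Qed.

Definition dual (f : seq term) (p : {poly 'M[K]_2}) : K :=
  \sum_(t <- f) (tcoef t)%:~R * coef_entry (tdeg t) (trow t) (tcol t) p.

Lemma dual_poly_of f s : dual f (poly_of s) = (pairing f s)%:~R.
Proof.
rewrite /dual /pairing rmorph_sum; apply: eq_bigr => t _.
by rewrite coef_entry_poly_of rmorphM.
Qed.

Lemma dualD f p q : dual f (p + q) = dual f p + dual f q.
Proof.
rewrite /dual -big_split; apply: eq_bigr => t _.
by rewrite /coef_entry coefD mxE mulrDr.
Qed.

End SparsePolynomials.

Arguments term_poly {K} t.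
Arguments poly_of {K} s.

Section Biorthogonal.
Variable C : fieldType.

Lemma dual_cscale f c (p : {poly 'M[C]_2}) : dual f (cscale c p) = c * dual f p.
Proof.
rewrite /dual mulr_sumr; apply: eq_bigr => t _.
by rewrite /coef_entry /cscale coefCM -mulmxE mul_scalar_mx mxE mulrCA.
Qed.

Variables (I : Type) (x : I -> {poly 'M[C]_2}) (f : I -> {poly 'M[C]_2} -> C).
Hypothesis fD : forall i p q, f i (p + q) = f i p + f i q.
Hypothesis f_cscale : forall i c p, f i (cscale c p) = c * f i p.
Hypothesis f_self : forall i, f i (x i) != 0.
Hypothesis f_other : forall i j, f i (x j) != 0 -> j = i.

Lemma lin_indep_biorthogonal (S : {poly 'M[C]_2} -> Prop) :
  (forall p, S p -> exists i, p = x i) -> lin_indep S.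
Proof.
move=> Sx s c s_uniq sS sum0 q qs; have [i qi] := Sx q (sS q qs).
have f0 : f i 0 = 0 by apply/(addrI (f i 0)); rewrite -fD !addr0.
have := congr1 (f i) sum0.
rewrite (big_morph (f i) (fD i) f0) f0 (bigD1_seq q) //= big1_seq ?addr0.
  by rewrite f_cscale qi => /eqP; rewrite mulf_eq0 (negbTE (f_self i)) orbF => /eqP.
move=> p /andP[p_neq_q /sS/Sx[j pj]]; rewrite f_cscale pj.
have [-> | /f_other ji] := eqVneq (f i (x j)) 0; first by rewrite mulr0.
by move: p_neq_q; rewrite pj ji -qi eqxx.
Qed.

End Biorthogonal.

Definition beta1_terms : seq term := [:: Term 0 false false 1; Term 0 true false (-1);
  Term 1 false false 1; Term 1 false true 1; Term 1 true true (-1); Term 2 false true 1].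
Definition beta3_terms : seq term := [:: Term 0 false false 1; Term 0 true false (-1);
  Term 1 false false (-1); Term 1 false true (-1); Term 1 true false 2;
  Term 1 true true 1; Term 2 false false 1].
Definition beta4_terms : seq term := [:: Term 2 true false 1].
Definition beta5_pow_terms (n : nat) : seq term :=
  [:: Term (2 * n) true true 1; Term 0 false false (n == 0)%N].

Inductive word :=
  | W41 | W3 | W1 | W5 of nat | W54 of nat | W514 of nat | W51 of nat
  | W35 of nat | W15 of nat | W354 of nat | W154 of nat.

Definition word_terms (w : word) : seq term :=
  match w with
  | W41 => terms_mul beta4_terms beta1_terms
  | W3 => beta3_terms
  | W1 => beta1_terms
  | W5 n => beta5_pow_terms n
  | W54 n => terms_mul (beta5_pow_terms n) beta4_terms
  | W514 n => terms_mul (terms_mul (beta5_pow_terms n) beta1_terms) beta4_terms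
  | W51 n => terms_mul (beta5_pow_terms n.+1) beta1_terms
  | W35 n => terms_mul beta3_terms (beta5_pow_terms n.+1)
  | W15 n => terms_mul beta1_terms (beta5_pow_terms n.+1)
  | W354 n => terms_mul (terms_mul beta3_terms (beta5_pow_terms n)) beta4_terms
  | W154 n => terms_mul (terms_mul beta1_terms (beta5_pow_terms n.+1)) beta4_terms
  end.

(* The entries E11 + E21 at degree 3 detect beta4 * beta1 =
   E21 z^2 + (E21 + E22) z^3 + E22 z^4 and vanish on all other words; they
   correct the functionals of beta5 ^+ 2 and beta5 * beta1, whose generic
   entries also see beta4 * beta1. *)
Definition word_dual (w : word) : seq term :=
  match w with
  | W41 => [:: Term 3 false false 1; Term 3 true false 1]
  | W3 => [:: Term 2 false false 1]
  | W1 => [:: Term 2 false true 1]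
  | W5 n => if n == 2 then [:: Term 4 true true 1; Term 3 false false (-1); Term 3 true false (-1)]
            else [:: Term (2 * n) true true 1]
  | W54 n => [:: Term (2 * n + 2) true false 1; Term (2 * n + 3) true true (-1);
                 Term (2 * n + 3) false true (-1)]
  | W514 n => if n == 0 then [:: Term 4 false false 1]
              else [:: Term (2 * n + 3) false false 1; Term (2 * n + 3) true false 1]
  | W51 n => if n == 0 then [:: Term 3 true true 1; Term 3 false true 1;
                              Term 3 false false (-1); Term 3 true false (-1)]
             else [:: Term (2 * n + 3) true true 1; Term (2 * n + 3) false true 1]
  | W35 n => [:: Term (2 * n + 3) false true 1; Term (2 * n + 4) false true (-1)]
  | W15 n => [:: Term (2 * n + 4) false true 1]
  | W354 n => [:: Term (2 * n + 3) false false 1; Term (2 * n + 4) false false (-1)]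
  | W154 n => [:: Term (2 * n + 6) false false 1]
  end.

Ltac decide_nat_tests :=
  repeat (simpl; match goal with |- context [(?a == ?b)%N] =>
    case: (@eqP nat a b) => ?; try (exfalso; lia) end).

Ltac compute_pairing :=
  rewrite /pairing /weight /terms_mul /beta1_terms /beta3_terms /beta4_terms
    /beta5_pow_terms unlock; decide_nat_tests.

Lemma pairing_word_dual_self w : pairing (word_dual w) (word_terms w) != 0.
Proof. by case: w => *; compute_pairing. Qed.

Lemma pairing_word_dual_neq0 w w' : pairing (word_dual w) (word_terms w') != 0 -> w' = w.
Proof.
case: w => [||| n | n | n | n | n | n | n | n];
case: w' => [||| m | m | m | m | m | m | m | m];
  compute_pairing; try done; move=> _; f_equal; lia.
Qed.

Section Betas.
Variable C : fieldType.
Hypothesis two_neq0 : 2 != 0 :> C.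

Ltac coef_entries :=
  apply: poly_entryP => -[|[|[|?]]] [] [];
  rewrite coef_entry_poly_of /coef_entry
    !(coefD, coefB, coefN, coefMn, coefCM, coefC, coefX, coefXn, mulr_natr);
  rewrite /weight unlock /= ?mulr1n ?mulr0n ?addr0 ?add0r ?mulmxnE !mxE /= /Defs.half.

Lemma beta1E : beta1 C = poly_of beta1_terms.
Proof. by coef_entries; field. Qed.

Lemma beta3E : beta3 C = poly_of beta3_terms.
Proof. by coef_entries; field. Qed.

Lemma beta4E : beta4 C = poly_of beta4_terms.
Proof. by coef_entries; field. Qed.

Lemma beta5E : beta5 C = poly_of [:: Term 2 true true 1].
Proof. by coef_entries; field. Qed.

Lemma beta5X n : beta5 C ^+ n = poly_of (beta5_pow_terms n).
Proof.
elim: n => [|n IHn].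
  apply: poly_entryP => k i j.
  rewrite coef_entry_poly_of /coef_entry expr0 coefC.
  by case: k => [|k]; case: i; case: j; rewrite /weight unlock /= ?mxE.
rewrite exprS IHn beta5E poly_of_mul; apply: poly_of_weight => k i j.
by rewrite /weight unlock /= mulnS; do 2 case: ifP.
Qed.

Definition word_poly (w : word) : {poly 'M[C]_2} :=
  match w with
  | W41 => beta4 C * beta1 C
  | W3 => beta3 C
  | W1 => beta1 C
  | W5 n => beta5 C ^+ n
  | W54 n => beta5 C ^+ n * beta4 C
  | W514 n => beta5 C ^+ n * beta1 C * beta4 C
  | W51 n => beta5 C ^+ n.+1 * beta1 C
  | W35 n => beta3 C * beta5 C ^+ n.+1
  | W15 n => beta1 C * beta5 C ^+ n.+1
  | W354 n => beta3 C * beta5 C ^+ n * beta4 C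
  | W154 n => beta1 C * beta5 C ^+ n.+1 * beta4 C
  end.

Lemma word_polyE w : word_poly w = poly_of (word_terms w).
Proof. by case: w => *; rewrite /= ?beta1E ?beta3E ?beta4E ?beta5X ?poly_of_mul. Qed.

Lemma Bset_word p : Bset p -> exists w, p = word_poly w.
Proof.
case=> [->|[->|[->|[[n ->]|[[n ->]|[[n ->]|[[[|n] // _ ->]|[[[|n] // _ ->]|
  [[[|n] // _ ->]|[[n ->]|[[|n] // _ ->]]]]]]]]]]].
- by exists W41.
- by exists W3.
- by exists W1.
- by exists (W5 n).
- by exists (W54 n).
- by exists (W514 n).
- by exists (W51 n).
- by exists (W35 n).
- by exists (W15 n).
- by exists (W354 n).
- by exists (W154 n).
Qed.

End Betas.

Theorem proposition4 (R : realType) : lin_indep (@Bset (R[i])%type).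
Proof.
have two_neq0 : 2 != 0 :> R[i] by rewrite pnatr_eq0.
apply: (@lin_indep_biorthogonal _ _ (word_poly R[i]) (fun w => dual (word_dual w))).
- by move=> w; exact: dualD.
- by move=> w; exact: dual_cscale.
- by move=> w; rewrite word_polyE // dual_poly_of intr_eq0 pairing_word_dual_self.
- by move=> w w'; rewrite word_polyE // dual_poly_of intr_eq0 => /pairing_word_dual_neq0.
- exact: Bset_word.
Qed.
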